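(* Let $\mathcal H$ be a separable complex Hilbert space, $A\in L(\mathcal H)^+$, $B\in L(\mathcal H)$ with closed range, and $\mathcal M$ a closed subspace such that $B(\mathcal M)$ is closed. Then $B$ admits an $A$-inverse restricted to $\mathcal M$ if and only if the pair $(A,B(\mathcal M))$ is compatible.
   Context: $\|z\|_A=\langle Az,z\rangle^{1/2}$. $G\in L(\mathcal H)$ is an $A$-inverse of $B$ restricted to $\mathcal M$ if $R(G)\subseteq\mathcal M$ and for each $y\in\mathcal H$, $\|y-BGy\|_A\le\|y-Bx\|_A$ for all $x\in\mathcal M$. $(A,\mathcal S)$ is compatible if there exists $Q\in L(\mathcal H)$ with $Q^2=Q$, $R(Q)=\mathcal S$, $AQ=Q^*A$. *)

From HB Require Import structures.
From mathcomp Require Import all_boot all_order all_algebra.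
From mathcomp Require Import complex.
From mathcomp Require Import reals.
Set Implicit Arguments. Unset Strict Implicit. Unset Printing Implicit Defensive.
Import Order.TTheory GRing.Theory Num.Theory.
Local Open Scope ring_scope.

Section Hilbert.
Variables (R : realType).
Local Notation C := (R[i]).
Variables (H : lmodType C) (ip : H -> H -> C).

Definition hnorm (x : H) : R := Num.sqrt (complex.Re (ip x x)).

Definition converges (u : nat -> H) (l : H) : Prop :=
  forall eps : R, 0 < eps -> exists N : nat, forall n : nat, (N <= n)%N ->
    hnorm (u n - l) < eps.

Definition cauchy (u : nat -> H) : Prop :=
  forall eps : R, 0 < eps -> exists N : nat, forall m n : nat,
    (N <= m)%N -> (N <= n)%N -> hnorm (u m - u n) < eps.

Definition is_separable_hilbert : Prop :=
  [/\ (forall (a : C) (x y z : H), ip (a *: x + y) z = a * ip x z + ip y z) /\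
      (forall x y : H, ip y x = conjc (ip x y)),
      (forall x : H, 0 <= ip x x),
      (forall x : H, ip x x = 0 -> x = 0),
      (forall u : nat -> H, cauchy u -> exists l : H, converges u l) &
      (exists D : nat -> H, forall (x : H) (eps : R), 0 < eps ->
          exists n : nat, hnorm (x - D n) < eps)].

Definition closed_set (S : H -> Prop) : Prop :=
  forall (u : nat -> H) (l : H), (forall n, S (u n)) -> converges u l -> S l.

Definition subspace (S : H -> Prop) : Prop :=
  [/\ S 0, (forall x y, S x -> S y -> S (x + y)) &
      (forall (a : C) x, S x -> S (a *: x))].

Definition closed_subspace (S : H -> Prop) : Prop := subspace S /\ closed_set S.

Definition bounded_op (T : H -> H) : Prop :=
  (forall (a : C) (x y : H), T (a *: x + y) = a *: T x + T y) /\
  (exists M : R, forall x : H, hnorm (T x) <= M * hnorm x).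

Definition positive_op (A : H -> H) : Prop :=
  bounded_op A /\ forall x : H, 0 <= ip (A x) x.

Definition op_range (T : H -> H) : H -> Prop := fun y => exists x, T x = y.

Definition op_image (T : H -> H) (S : H -> Prop) : H -> Prop :=
  fun y => exists2 x, S x & T x = y.

Definition is_adjoint (T S : H -> H) : Prop :=
  forall x y : H, ip (T x) y = ip x (S y).

Definition Anorm (A : H -> H) (z : H) : R := Num.sqrt (complex.Re (ip (A z) z)).

Definition A_inverse_restricted (A B : H -> H) (M : H -> Prop) (G : H -> H) : Prop :=
  [/\ bounded_op G,
      (forall y, op_range G y -> M y) &
      (forall y x : H, M x -> Anorm A (y - B (G y)) <= Anorm A (y - B x))].

Definition compatible (A : H -> H) (S : H -> Prop) : Prop :=
  exists Q : H -> H,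
    [/\ bounded_op Q,
        (forall x, Q (Q x) = Q x),
        (forall y, op_range Q y <-> S y) &
        exists Qs : H -> H, bounded_op Qs /\ is_adjoint Q Qs /\
          (forall x, A (Q x) = Qs (A x))].

End Hilbert.

(* Forward direction: minimality of [y - B (G y)] in A-seminorm along the directions
   [B x], [x] in [M], makes the residual A-orthogonal to [S = B(M)].  Adding to
   [B (G y)] the orthogonal projection of the residual onto the closed subspace of
   [S] that is A-orthogonal to [S] gives a bounded projection [Q] onto [S] with
   A-orthogonal kernel, and any such [Q] satisfies [A Q = Q^* A].
   Backward direction: for a compatible [Q], [y - Q y] is A-orthogonal to [S], so by
   A-Pythagoras [Q y] is an A-best approximation of [y] in [S].  Since [S] is closed,
   the open mapping theorem for [B] on [M] yields a bounded right inverse [X] of [B]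
   on [S], linear once preimages are chosen orthogonal to [M] intersected with the
   kernel of [B]; then [G := X \o Q] is an A-inverse. *)

From mathcomp Require Import all_boot all_order all_algebra.
From mathcomp Require Import complex.
From mathcomp Require Import boolp classical_sets reals.
From mathcomp Require Import ring lra.
From Pilot Require Import Defs.
Set Implicit Arguments. Unset Strict Implicit. Unset Printing Implicit Defensive.
Import Order.TTheory GRing.Theory Num.Theory.
Local Open Scope ring_scope.
Local Open Scope complex_scope.

(** * Hermitian forms *)

Definition hermitian_form (R : realType) (H : lmodType R[i]) (f : H -> H -> R[i]) :=
  (forall (a : R[i]) (x y z : H), f (a *: x + y) z = a * f x z + f y z) /\
  (forall x y : H, f y x = conjc (f x y)).

Section HermitianForm.
Variables (R : realType) (H : lmodType R[i]) (f : H -> H -> R[i]).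
Hypothesis hf : hermitian_form f.

Lemma formC x y : f y x = conjc (f x y). Proof. exact: hf.2. Qed.

Lemma formDl x y z : f (x + y) z = f x z + f y z.
Proof. by rewrite -{1}[x]scale1r hf.1 mul1r. Qed.

Lemma form0l z : f 0 z = 0.
Proof. by apply: (addrI (f 0 z)); rewrite -formDl !addr0. Qed.

Lemma formZl a x z : f (a *: x) z = a * f x z.
Proof. by rewrite -[a *: x]addr0 hf.1 form0l addr0. Qed.

Lemma formNl x z : f (- x) z = - f x z.
Proof. by rewrite -scaleN1r formZl mulN1r. Qed.

Lemma formBl x y z : f (x - y) z = f x z - f y z.
Proof. by rewrite formDl formNl. Qed.

Lemma formDr x y z : f z (x + y) = f z x + f z y.
Proof. by rewrite formC formDl rmorphD /= -!formC. Qed.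

Lemma formZr a x z : f z (a *: x) = conjc a * f z x.
Proof. by rewrite formC formZl rmorphM /= -formC. Qed.

Lemma form0r z : f z 0 = 0.
Proof. by rewrite formC form0l conjc0. Qed.

Lemma formNr x z : f z (- x) = - f z x.
Proof. by rewrite formC formNl rmorphN /= -formC. Qed.

Lemma formBr x y z : f z (x - y) = f z x - f z y.
Proof. by rewrite formDr formNr. Qed.

Lemma Re_formC x y : complex.Re (f y x) = complex.Re (f x y).
Proof. by rewrite formC; case: (f x y). Qed.

Definition qform x := complex.Re (f x x).

Lemma qformD x y : qform (x + y) = qform x + qform y + 2 * complex.Re (f x y).
Proof. rewrite /qform formDl !formDr !raddfD /= Re_formC; ring. Qed.

Lemma qformN x : qform (- x) = qform x.
Proof. by rewrite /qform formNl formNr opprK. Qed.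

Lemma qformB x y : qform (x - y) = qform x + qform y - 2 * complex.Re (f x y).
Proof. rewrite qformD qformN formNr raddfN /=; ring. Qed.

Lemma qformZ a x :
  qform (a *: x) = (complex.Re a ^+ 2 + complex.Im a ^+ 2) * qform x.
Proof.
rewrite /qform formZl formZr mulrA [a * _]mulrC.
by case: a => p q; case: (f x x) => u v /=; simpc; ring.
Qed.

Lemma qformBZ u k c : qform (u - c *: k) = qform u
  - 2 * complex.Re (conjc c * f u k) + (complex.Re c ^+ 2 + complex.Im c ^+ 2) * qform k.
Proof.
rewrite /qform !formBl !formBr !formZl !formZr (formC u k) !raddfB /=.
by case: c => p q; case: (f u k) => a b; case: (f k k) => g h /=; simpc; ring.
Qed.

(* Perturbing [u] along [k] by [c := t * f u k] changes [qform] by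
   [|f u k|^2 (t^2 qform k - 2 t)], which is negative for small [t > 0]. *)
Lemma form_eq0_of_qform_min u k :
  (forall c, qform u <= qform (u - c *: k)) -> f u k = 0.
Proof.
move=> umin; set a := f u k; set N := complex.Re a ^+ 2 + complex.Im a ^+ 2.
have N_ge0 : 0 <= N by rewrite addr_ge0 // sqr_ge0.
have perturb_ge0 t : 0 < t -> 0 <= N * (t * qform k - 2) * t.
  move=> t_gt0; have := umin (t%:C * a); rewrite qformBZ -/a.
  have -> : complex.Re (conjc (t%:C * a) * a) = t * N.
    by rewrite /N; case: (a) => p q /=; simpc; ring.
  have -> : complex.Re (t%:C * a) ^+ 2 + complex.Im (t%:C * a) ^+ 2 = t ^+ 2 * N.
    by rewrite /N; case: (a) => p q /=; simpc; ring.
  move=> h; nra.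
set t := (`|qform k| + 1)^-1.
have t_gt0 : 0 < t by rewrite invr_gt0; have := normr_ge0 (qform k); lra.
have tk_lt1 : t * qform k < 1.
  rewrite mulrC ltr_pdivrMr; last by have := normr_ge0 (qform k); lra.
  by have := ler_norm (qform k); lra.
have N0 : N = 0.
  apply/eqP; rewrite eq_le N_ge0 andbT.
  have : 0 <= N * (t * qform k - 2) by rewrite -(pmulr_lge0 _ t_gt0) perturb_ge0.
  nra.
have Re0 : complex.Re a = 0.
  by apply/eqP; rewrite -sqrf_eq0 eq_le sqr_ge0 andbT -N0 lerDl sqr_ge0.
have Im0 : complex.Im a = 0.
  by apply/eqP; rewrite -sqrf_eq0 eq_le sqr_ge0 andbT -N0 lerDr sqr_ge0.
by apply/eqP; rewrite eq_complex Re0 Im0 /= !eqxx.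
Qed.

Hypothesis qform_ge0 : forall x, 0 <= qform x.

(* Nonnegativity of [t |-> qform (x + t y)] forces its discriminant to be [<= 0]. *)
Lemma Re_form_sqr_le x y : complex.Re (f x y) ^+ 2 <= qform x * qform y.
Proof.
set r := complex.Re (f x y).
have quad_ge0 t : 0 <= qform x + 2 * t * r + t ^+ 2 * qform y.
  have := qform_ge0 (x + t%:C *: y).
  rewrite qformD qformZ /= expr0n /= addr0 formZr.
  have -> : complex.Re (conjc t%:C * f x y) = t * r.
    by rewrite /r; case: (f x y) => p q /=; simpc.
  lra.
have qx_ge0 := qform_ge0 x; have qy_ge0 := qform_ge0 y.
have [qy0|qy_neq0] := eqVneq (qform y) 0.
  rewrite qy0 mulr0; have [r0|r_neq0] := eqVneq r 0; first by rewrite r0 expr0n.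
  have := quad_ge0 (- (qform x + 1) / (2 * r)); rewrite qy0 mulr0 addr0.
  have -> : 2 * (- (qform x + 1) / (2 * r)) * r = - (qform x + 1) by field.
  lra.
have qy_gt0 : 0 < qform y by rewrite lt_def qy_neq0.
have := quad_ge0 (- r / qform y).
have -> : qform x + 2 * (- r / qform y) * r + (- r / qform y) ^+ 2 * qform y
    = qform x - r ^+ 2 / qform y by field.
by rewrite subr_ge0 ler_pdivrMr // mulrC.
Qed.

End HermitianForm.

(** * The Hilbert-space norm *)

Section HilbertSpace.
Variables (R : realType) (H : lmodType R[i]) (ip : H -> H -> R[i]).
Hypothesis hH : is_separable_hilbert ip.
Local Notation hnorm := (hnorm ip).

Lemma hilbert_hermitian : hermitian_form ip.
Proof. by case: hH. Qed.

Let hf := hilbert_hermitian.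

Lemma ip_ge0 x : 0 <= ip x x. Proof. by case: hH. Qed.

Lemma ip_eq0 x : ip x x = 0 -> x = 0. Proof. by case: hH => _ _ h _ _; apply: h. Qed.

Lemma ipxx x : ip x x = (qform ip x)%:C.
Proof.
have := ip_ge0 x; rewrite lecE => /andP[/eqP Im0 _].
by rewrite /qform; case: (ip x x) Im0 => p q /= ->.
Qed.

Lemma qform_ge0 x : 0 <= qform ip x.
Proof. by have := ip_ge0 x; rewrite ipxx ler0c. Qed.

Lemma complete u : cauchy ip u -> exists l, converges ip u l.
Proof. by case: hH => _ _ _ h _; apply: h. Qed.

Lemma hnorm_ge0 x : 0 <= hnorm x. Proof. exact: sqrtr_ge0. Qed.

Lemma hnorm_sqr x : hnorm x ^+ 2 = qform ip x.
Proof. exact: sqr_sqrtr (qform_ge0 x). Qed.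

Lemma hnorm_eq0 x : hnorm x = 0 -> x = 0.
Proof. by move=> h; apply: ip_eq0; rewrite ipxx -hnorm_sqr h expr0n. Qed.

Lemma hnorm0 : hnorm 0 = 0.
Proof. by rewrite /Defs.hnorm (form0l hf) /= sqrtr0. Qed.

Lemma hnormN x : hnorm (- x) = hnorm x.
Proof. by rewrite /Defs.hnorm -!/(qform ip _) (qformN hf). Qed.

Lemma hnormBC x y : hnorm (x - y) = hnorm (y - x).
Proof. by rewrite -hnormN opprB. Qed.

Lemma hnormZ a x :
  hnorm (a *: x) = Num.sqrt (complex.Re a ^+ 2 + complex.Im a ^+ 2) * hnorm x.
Proof. by rewrite /Defs.hnorm -!/(qform ip _) (qformZ hf) sqrtrM // addr_ge0 ?sqr_ge0. Qed.

Lemma hnormZr (t : R) x : hnorm (t%:C *: x) = `|t| * hnorm x.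
Proof. by rewrite hnormZ /= expr0n /= addr0 sqrtr_sqr. Qed.

Lemma norm_Re_ip_le x y : `|complex.Re (ip x y)| <= hnorm x * hnorm y.
Proof.
rewrite -(ler_pXn2r (n:=2)) ?nnegrE ?mulr_ge0 ?hnorm_ge0 //.
by rewrite exprMn !hnorm_sqr real_normK ?num_real // Re_form_sqr_le //; exact: qform_ge0.
Qed.

Lemma Re_ip_le x y : complex.Re (ip x y) <= hnorm x * hnorm y.
Proof. exact: le_trans (ler_norm _) (norm_Re_ip_le x y). Qed.

Lemma norm_Im_ip_le x y : `|complex.Im (ip x y)| <= hnorm x * hnorm y.
Proof.
have := norm_Re_ip_le x ('i *: y).
rewrite hnormZ /= expr0n expr1n add0r sqrtr1 mul1r (formZr hf).
by case: (ip x y) => p q /=; simpc.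
Qed.

Lemma hnormD x y : hnorm (x + y) <= hnorm x + hnorm y.
Proof.
rewrite -(ler_pXn2r (n:=2)) ?nnegrE ?addr_ge0 ?hnorm_ge0 //.
rewrite hnorm_sqr (qformD hf) sqrrD !hnorm_sqr.
by have := Re_ip_le x y; lra.
Qed.

Lemma hnormB_le x y z : hnorm (x - z) <= hnorm (x - y) + hnorm (y - z).
Proof.
have -> : x - z = (x - y) + (y - z) by rewrite addrA subrK.
exact: hnormD.
Qed.

Lemma hnorm_small_eq0 x : (forall e, 0 < e -> hnorm x <= e) -> x = 0.
Proof.
move=> small; apply: hnorm_eq0; apply/eqP; rewrite eq_le hnorm_ge0 andbT.
by apply/ler_addgt0Pr => e e_gt0; rewrite add0r small.
Qed.

Lemma ip_ext z1 z2 : (forall x, ip x z1 = ip x z2) -> z1 = z2.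
Proof.
move=> h; apply/eqP; rewrite -subr_eq0; apply/eqP; apply: ip_eq0.
by rewrite (formBr hf) h subrr.
Qed.

End HilbertSpace.

(** * Sequences and bounded operators *)

Section HalfPowers.
Variable R : realType.

Definition halfpow (n : nat) : R := 2^-1 ^+ n.

Lemma halfpow0 : halfpow 0 = 1. Proof. exact: expr0. Qed.

Lemma halfpow_gt0 n : 0 < halfpow n.
Proof. by rewrite exprn_gt0 // invr_gt0. Qed.

Lemma halfpowS n : halfpow n.+1 = halfpow n / 2.
Proof. exact: exprSr. Qed.

Lemma halfpowD m n : halfpow (m + n) = halfpow m * halfpow n.
Proof. exact: exprD. Qed.

Lemma halfpow_le m n : (m <= n)%N -> halfpow n <= halfpow m.
Proof.
move=> /subnKC <-; rewrite halfpowD ler_piMr ?exprn_ge0 ?invr_ge0 //.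
by rewrite exprn_ile1 ?invr_ge0 // invf_le1 // ler1n.
Qed.

Lemma halfpow_small c e : 0 < e -> exists N, c * halfpow N < e.
Proof.
move=> e_gt0; set N := Num.bound (`|c| / e); exists N.
have two_gt0 : 0 < (2 : R) ^+ N by rewrite exprn_gt0.
have : `|c| / e < 2 ^+ N by apply: upper_nthrootP.
rewrite ltr_pdivrMr // => lt_c; rewrite /halfpow exprVn ltr_pdivrMr //.
by apply: le_lt_trans (ler_norm c) _; rewrite mulrC.
Qed.

End HalfPowers.

Definition linear_op (R : realType) (H : lmodType R[i]) (T : H -> H) :=
  forall (a : R[i]) (x y : H), T (a *: x + y) = a *: T x + T y.

Section LinearOps.
Variables (R : realType) (H : lmodType R[i]) (T : H -> H).
Hypothesis hT : linear_op T.

Lemma linopD x y : T (x + y) = T x + T y.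
Proof. by rewrite -{1}[x]scale1r hT scale1r. Qed.

Lemma linop0 : T 0 = 0.
Proof. by apply: (addrI (T 0)); rewrite -linopD !addr0. Qed.

Lemma linopZ a x : T (a *: x) = a *: T x.
Proof. by rewrite -[a *: x]addr0 hT linop0 addr0. Qed.

Lemma linopN x : T (- x) = - T x.
Proof. by rewrite -scaleN1r linopZ scaleN1r. Qed.

Lemma linopB x y : T (x - y) = T x - T y.
Proof. by rewrite linopD linopN. Qed.

End LinearOps.

Section Subspaces.
Variables (R : realType) (H : lmodType R[i]) (K : H -> Prop).
Hypothesis hK : subspace K.

Lemma subspace0 : K 0. Proof. by case: hK. Qed.

Lemma subspaceD x y : K x -> K y -> K (x + y).
Proof. by case: hK => _ h _; apply: h. Qed.

Lemma subspaceZ a x : K x -> K (a *: x).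
Proof. by case: hK => _ _ h; apply: h. Qed.

Lemma subspaceB x y : K x -> K y -> K (x - y).
Proof. by move=> Kx Ky; rewrite -scaleN1r; apply/subspaceD/subspaceZ. Qed.

Lemma subspace_sum n (x : 'I_n -> H) : (forall i, K (x i)) -> K (\sum_i x i).
Proof.
move=> Kx; elim/big_ind: _ => //; [exact: subspace0 | exact: subspaceD].
Qed.

End Subspaces.

Section Operators.
Variables (R : realType) (H : lmodType R[i]) (ip : H -> H -> R[i]).
Hypothesis hH : is_separable_hilbert ip.
Local Notation hnorm := (hnorm ip).
Local Notation converges := (converges ip).
Local Notation bounded_op := (bounded_op ip).

Lemma bounded_op_gt0 T : bounded_op T ->
  exists2 C, 0 < C & forall x, hnorm (T x) <= C * hnorm x.
Proof.
case=> _ [C hC]; exists (`|C| + 1); first by have := normr_ge0 C; lra.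
move=> x; apply: le_trans (hC x) _; rewrite ler_wpM2r ?hnorm_ge0 //.
by have := ler_norm C; lra.
Qed.

Lemma bounded_op_id : bounded_op (fun x => x).
Proof. by split=> //; exists 1 => x; rewrite mul1r. Qed.

Lemma bounded_op_comp T1 T2 :
  bounded_op T1 -> bounded_op T2 -> bounded_op (fun x => T1 (T2 x)).
Proof.
move=> hT1 hT2; split; first by move=> a x y; rewrite hT2.1 hT1.1.
have [C1 C1_gt0 hC1] := bounded_op_gt0 hT1; have [C2 _ hC2] := bounded_op_gt0 hT2.
by exists (C1 * C2) => x; apply: le_trans (hC1 _) _; rewrite -mulrA ler_pM2l.
Qed.

Lemma bounded_opD T1 T2 :
  bounded_op T1 -> bounded_op T2 -> bounded_op (fun x => T1 x + T2 x).
Proof.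
move=> hT1 hT2; split; first by move=> a x y; rewrite hT1.1 hT2.1 scalerDr addrACA.
have [C1 _ hC1] := bounded_op_gt0 hT1; have [C2 _ hC2] := bounded_op_gt0 hT2.
exists (C1 + C2) => x; apply: le_trans (hnormD hH _ _) _.
by rewrite mulrDl lerD.
Qed.

Lemma bounded_opB T1 T2 :
  bounded_op T1 -> bounded_op T2 -> bounded_op (fun x => T1 x - T2 x).
Proof.
move=> hT1 hT2; apply: bounded_opD => //; split.
  by move=> a x y; rewrite hT2.1 opprD scalerN.
by have [C _ hC] := bounded_op_gt0 hT2; exists C => x; rewrite (hnormN hH).
Qed.

Lemma converges_unique u l1 l2 : converges u l1 -> converges u l2 -> l1 = l2.
Proof.
move=> ul1 ul2; apply/eqP; rewrite -subr_eq0; apply/eqP.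
apply: (hnorm_small_eq0 hH) => e e_gt0; have e2_gt0 : 0 < e / 2 by rewrite divr_gt0.
have [N1 hN1] := ul1 _ e2_gt0; have [N2 hN2] := ul2 _ e2_gt0; set n := maxn N1 N2.
have := hnormB_le hH l1 (u n) l2; rewrite (hnormBC hH l1 (u n)).
have := hN1 n (leq_maxl _ _); have := hN2 n (leq_maxr _ _); lra.
Qed.

Lemma converges_cst l : converges (fun _ => l) l.
Proof. by move=> e e_gt0; exists 0%N => n _; rewrite subrr hnorm0. Qed.

Lemma converges_op T u l :
  bounded_op T -> converges u l -> converges (fun n => T (u n)) (T l).
Proof.
move=> hT ul e e_gt0; have [C C_gt0 hC] := bounded_op_gt0 hT.
have [N hN] := ul (e / C) (divr_gt0 e_gt0 C_gt0); exists N => n le_Nn.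
rewrite -(linopB hT.1); apply: le_lt_trans (hC _) _.
by rewrite -ltr_pdivlMl // mulrC hN.
Qed.

Lemma convergesB u v l m :
  converges u l -> converges v m -> converges (fun n => u n - v n) (l - m).
Proof.
move=> ul vm e e_gt0; have e2_gt0 : 0 < e / 2 by rewrite divr_gt0.
have [N1 hN1] := ul _ e2_gt0; have [N2 hN2] := vm _ e2_gt0.
exists (maxn N1 N2) => n; rewrite geq_max => /andP[le_N1n le_N2n].
have -> : u n - v n - (l - m) = (u n - l) - (v n - m).
  by rewrite !opprD !opprK addrACA.
apply: le_lt_trans (hnormB_le hH _ 0 _) _; rewrite subr0 sub0r (hnormN hH).
by have := hN1 n le_N1n; have := hN2 n le_N2n; lra.
Qed.

Lemma converges_shift u l j : converges u l -> converges (fun n => u (n + j)%N) l.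
Proof.
move=> ul e e_gt0; have [N hN] := ul e e_gt0.
by exists N => n le_Nn; apply: hN; apply: leq_trans le_Nn (leq_addr _ _).
Qed.

Lemma converges_hnorm_le u l c : converges u l ->
  (forall e, 0 < e -> exists N, forall n, (N <= n)%N -> hnorm (u n) <= c + e) ->
  hnorm l <= c.
Proof.
move=> ul ev_le; apply/ler_addgt0Pr => e e_gt0; have e2_gt0 : 0 < e / 2 by rewrite divr_gt0.
have [N1 hN1] := ul _ e2_gt0; have [N2 hN2] := ev_le _ e2_gt0; set n := maxn N1 N2.
have := hnormB_le hH l (u n) 0; rewrite !subr0 (hnormBC hH l).
have := hN1 n (leq_maxl _ _); have := hN2 n (leq_maxr _ _); lra.
Qed.

Lemma converges_hnorm_le_bound u l c :
  converges u l -> (forall n, hnorm (u n) <= c) -> hnorm l <= c.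
Proof.
move=> ul le_c; apply: converges_hnorm_le ul _ => e e_gt0.
by exists 0%N => n _; apply: le_trans (le_c n) _; rewrite lerDl ltW.
Qed.

Lemma converges_halfpow0 u c :
  (forall n, hnorm (u n) <= halfpow R n * c) -> converges u 0.
Proof.
move=> le_u e e_gt0; have [N hN] := halfpow_small c e_gt0.
have c_ge0 : 0 <= c.
  by have := le_u 0%N; rewrite halfpow0 mul1r; apply: le_trans; apply: hnorm_ge0.
exists N => n le_Nn; rewrite subr0; apply: le_lt_trans (le_u n) _.
by apply: le_lt_trans hN; rewrite mulrC ler_wpM2l ?halfpow_le.
Qed.

Lemma cauchy_geometric u C :
  (forall n, hnorm (u n.+1 - u n) <= C * halfpow R n) -> cauchy ip u.
Proof.
move=> le_step.
have C_ge0 : 0 <= C.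
  by have := le_step 0%N; rewrite halfpow0 mulr1; apply: le_trans; apply: hnorm_ge0.
have tail n k : hnorm (u (n + k)%N - u n) <= 2 * C * halfpow R n * (1 - halfpow R k).
  elim: k => [|k IH]; first by rewrite addn0 subrr (hnorm0 hH) halfpow0 subrr mulr0.
  apply: le_trans (hnormB_le hH _ (u (n + k)%N) _) _.
  rewrite addnS; have := le_step (n + k)%N; rewrite halfpowD halfpowS.
  by have := halfpow_gt0 R n; have := halfpow_gt0 R k; nra.
have tail_le m n : (n <= m)%N -> hnorm (u m - u n) <= 2 * C * halfpow R n.
  move=> /subnKC <-; apply: le_trans (tail _ _) _.
  have : 0 <= C * halfpow R n * halfpow R (m - n) by rewrite !mulr_ge0 // ltW // halfpow_gt0.
  lra.
move=> e e_gt0; have [N hN] := halfpow_small (4 * C) e_gt0.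
exists N => m n le_Nm le_Nn; apply: le_lt_trans (hnormB_le hH _ (u N) _) _.
rewrite (hnormBC hH (u N)).
by have := tail_le _ _ le_Nm; have := tail_le _ _ le_Nn; lra.
Qed.

Lemma ip_small_eq0 a (z : R[i]) :
  (forall e, 0 < e -> exists2 y, z = ip a y & hnorm y < e) -> z = 0.
Proof.
move=> small; set k := hnorm a + 1.
have k_gt0 : 0 < k by rewrite /k; have := hnorm_ge0 ip a; lra.
have bound e : 0 < e -> `|complex.Re z| <= e * k /\ `|complex.Im z| <= e * k.
  move=> e_gt0; have [y -> lt_y] := small e e_gt0.
  have : hnorm a * hnorm y <= e * k.
    by have := hnorm_ge0 ip a; have := hnorm_ge0 ip y; rewrite /k; nra.
  move=> le_ay; split; apply: le_trans le_ay.
    exact: (norm_Re_ip_le hH).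
  exact: (norm_Im_ip_le hH).
have part_eq0 (r : R) : (forall e, 0 < e -> `|r| <= e * k) -> r = 0.
  move=> le_r; apply/normr0_eq0/eqP; rewrite eq_le normr_ge0 andbT.
  apply/ler_addgt0Pr => e e_gt0; rewrite add0r.
  by have := le_r (e / k) (divr_gt0 e_gt0 k_gt0); rewrite divfK ?gt_eqF.
apply/eqP; rewrite eq_complex.
rewrite (part_eq0 _ (fun e e0 => (bound e e0).1)).
by rewrite (part_eq0 _ (fun e e0 => (bound e e0).2)) /= !eqxx.
Qed.

Lemma ip_limit_eq0r a u l :
  converges u l -> (forall n, ip a (u n) = 0) -> ip a l = 0.
Proof.
move=> ul ip_u0; apply: (ip_small_eq0 (a := a)) => e e_gt0; have [N hN] := ul e e_gt0.
exists (l - u N); last by rewrite (hnormBC hH) hN.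
by rewrite (formBr (hilbert_hermitian hH)) ip_u0 subr0.
Qed.

Lemma ip_limit_eq0l a u l :
  converges u l -> (forall n, ip (u n) a = 0) -> ip l a = 0.
Proof.
move=> ul ip_u0; have hf := hilbert_hermitian hH.
rewrite (formC hf) (ip_limit_eq0r ul) ?conjc0 // => n.
by rewrite (formC hf) ip_u0 conjc0.
Qed.

End Operators.

(** * Projection theorem and Riesz representation *)

Section Projection.
Variables (R : realType) (H : lmodType R[i]) (ip : H -> H -> R[i]).
Hypothesis hH : is_separable_hilbert ip.
Local Notation hnorm := (hnorm ip).
Local Notation qform := (qform ip).
Let hf := hilbert_hermitian hH.

Section ClosedSubspace.
Variable K : H -> Prop.
Hypothesis hK : closed_subspace ip K.
Let hKs : subspace K. Proof. by case: hK. Qed.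

(* Parallelogram law at [x - kk m] and [x - kk n]: the midpoint of [kk m] and [kk n]
   lies in [K], so [qform (kk m - kk n) <= 2 halfpow m + 2 halfpow n]. *)
Lemma cauchy_minimizing x (D : R) (kk : nat -> H) :
  (forall k, K k -> D <= qform (x - k)) ->
  (forall n, K (kk n) /\ qform (x - kk n) <= D + halfpow R n) -> cauchy ip kk.
Proof.
move=> lbD near_D e e_gt0; have [N hN] := halfpow_small 4 (mulr_gt0 e_gt0 e_gt0).
exists N => m n le_Nm le_Nn; have [Km qm] := near_D m; have [Kn qn] := near_D n.
have K_mid : K ((2^-1 : R[i]) *: (kk m + kk n)) by apply: (subspaceZ hKs); apply: (subspaceD hKs).
have sum_eq : (x - kk m) + (x - kk n) = 2 *: (x - (2^-1 : R[i]) *: (kk m + kk n)).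
  rewrite scalerBr scalerA mulfV ?scale1r ?pnatr_eq0 //.
  by rewrite scaler_nat mulr2n opprD addrACA.
have diff_eq : (x - kk m) - (x - kk n) = kk n - kk m.
  by rewrite opprB addrC addrA subrK.
have := qformD hf (x - kk m) (x - kk n); have := qformB hf (x - kk m) (x - kk n).
rewrite sum_eq diff_eq qformZ // -(qformN hf (kk n - kk m)) opprB.
have -> : complex.Re (2 : R[i]) ^+ 2 + complex.Im (2 : R[i]) ^+ 2 = 4.
  by rewrite /= addr0 expr0n addr0; ring.
rewrite -(ltr_pXn2r (n:=2)) ?nnegrE ?hnorm_ge0 ?ltW // hnorm_sqr //.
have := lbD _ K_mid; have := halfpow_le R le_Nm; have := halfpow_le R le_Nn; lra.
Qed.

Lemma best_approx_exists x :
  exists2 p, K p & forall k, K k -> qform (x - p) <= qform (x - k).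
Proof.
pose E : set R := fun t => exists2 k, K k & t = qform (x - k).
have E_inf : has_inf E.
  split; first by exists (qform (x - 0)), 0; first exact: (subspace0 hKs).
  by exists 0 => _ [k _ ->]; apply: qform_ge0.
set D := inf E; have D_ge0 : 0 <= D.
  by apply: lb_le_inf; [case: E_inf | move=> _ [k _ ->]; apply: qform_ge0].
have lbD k : K k -> D <= qform (x - k) by move=> Kk; apply: (ge_inf E_inf.2); exists k.
have near_inf n : exists k, K k /\ qform (x - k) <= D + halfpow R n.
  have [_ [k Kk ->] lt_k] := inf_adherent (halfpow_gt0 R n) E_inf.
  by exists k; split; last exact: ltW.
have [kk near_D] := choice near_inf.
have [p kk_p] := complete hH (cauchy_minimizing lbD near_D).
have Kp : K p by apply: hK.2 kk_p => n; case: (near_D n).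
exists p => // k Kk; apply: le_trans (lbD _ Kk).
suff : hnorm (x - p) <= Num.sqrt D.
  by rewrite -(ler_pXn2r (n:=2)) ?nnegrE ?sqrtr_ge0 ?hnorm_ge0 // hnorm_sqr // sqr_sqrtr.
apply: (converges_hnorm_le hH (u := fun n => x - kk n)).
  exact: (convergesB hH (converges_cst hH x) kk_p).
move=> e e_gt0; have [N hN] := halfpow_small 1 (mulr_gt0 e_gt0 e_gt0).
exists N => n le_Nn.
rewrite -(ler_pXn2r (n:=2)) ?nnegrE ?addr_ge0 ?sqrtr_ge0 ?hnorm_ge0 //; last exact: ltW.
rewrite hnorm_sqr // sqrrD sqr_sqrtr // mulr2n; apply: le_trans (near_D n).2 _.
have := halfpow_le R le_Nn; have := sqrtr_ge0 D; nra.
Qed.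

Lemma orthogonal_projection_exists x :
  exists2 p, K p & forall k, K k -> ip (x - p) k = 0.
Proof.
have [p Kp p_min] := best_approx_exists x; exists p => // k Kk.
apply: (form_eq0_of_qform_min hf) => c; rewrite -addrA -opprD.
by apply: p_min; apply: (subspaceD hKs) => //; apply: (subspaceZ hKs).
Qed.

Definition orthoproj x : H := projT1 (cid2 (orthogonal_projection_exists x)).

Lemma orthoproj_in x : K (orthoproj x).
Proof. by rewrite /orthoproj; case: cid2. Qed.

Lemma orthoproj_orth x k : K k -> ip (x - orthoproj x) k = 0.
Proof. by rewrite /orthoproj; case: cid2 => p _ /= p_orth; apply: p_orth. Qed.

Lemma orthoproj_unique x p :
  K p -> (forall k, K k -> ip (x - p) k = 0) -> orthoproj x = p.
Proof.
move=> Kp p_orth.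
have Kd : K (orthoproj x - p) by apply: (subspaceB hKs) => //; apply: orthoproj_in.
apply/eqP; rewrite -subr_eq0; apply/eqP; apply: (ip_eq0 hH).
rewrite {1}(_ : orthoproj x - p = (x - p) - (x - orthoproj x)).
  by rewrite (formBl hf) p_orth // orthoproj_orth // subrr.
by rewrite opprB [RHS]addrC addrA subrK.
Qed.

Lemma orthoproj_linear : linear_op orthoproj.
Proof.
move=> a x y; apply: orthoproj_unique.
  by apply: (subspaceD hKs); [apply: (subspaceZ hKs) |]; apply: orthoproj_in.
move=> k Kk; have -> : a *: x + y - (a *: orthoproj x + orthoproj y)
    = a *: (x - orthoproj x) + (y - orthoproj y) by rewrite scalerBr opprD addrACA.
by rewrite hf.1 !orthoproj_orth // mulr0 addr0.
Qed.

Lemma qform_orthoproj x :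
  qform x = qform (orthoproj x) + qform (x - orthoproj x).
Proof.
rewrite -{1}[x](subrK (orthoproj x)) addrC (qformD hf (orthoproj x)) (formC hf) orthoproj_orth.
  by rewrite conjc0 /= mulr0 addr0.
exact: orthoproj_in.
Qed.

Lemma hnorm_orthoproj_le x : hnorm (orthoproj x) <= hnorm x.
Proof.
rewrite ler_sqrt ?qform_ge0 // -!/(qform _) (qform_orthoproj x).
by rewrite lerDl qform_ge0.
Qed.

Lemma hnorm_sub_orthoproj_le x : hnorm (x - orthoproj x) <= hnorm x.
Proof.
rewrite ler_sqrt ?qform_ge0 // -!/(qform _) (qform_orthoproj x).
by rewrite lerDr qform_ge0.
Qed.

Lemma orthoproj_bounded : bounded_op ip orthoproj.
Proof.
split; first exact: orthoproj_linear.
by exists 1 => x; rewrite mul1r hnorm_orthoproj_le.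
Qed.

End ClosedSubspace.

(* The vector [w := x0 - orthoproj x0] spans the orthogonal complement of the
   kernel; [f x *: w - f w *: x] lies in the kernel for every [x]. *)
Lemma riesz_representation (f : H -> R[i]) :
  (forall a x y, f (a *: x + y) = a * f x + f y) ->
  closed_set ip (fun x => f x = 0) -> exists z, forall x, f x = ip x z.
Proof.
move=> f_lin ker_closed.
have f0 : f 0 = 0.
  by have := f_lin 1 0 0; rewrite scale1r addr0 mul1r -{1}[f 0]add0r => /addIr.
have fZ a x : f (a *: x) = a * f x by rewrite -[a *: x]addr0 f_lin f0 addr0.
have fD x y : f (x + y) = f x + f y by rewrite -{1}[x]scale1r f_lin mul1r.
have [f_eq0|/existsNP [x0 fx0_neq0]] := pselect (forall x, f x = 0).
  by exists 0 => x; rewrite (form0r hf) f_eq0.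
pose K x := f x = 0.
have hK : closed_subspace ip K.
  split=> //; split; rewrite /K //.
  - by move=> x y fx0 fy0; rewrite fD fx0 fy0 addr0.
  - by move=> a x fx0; rewrite fZ fx0 mulr0.
set w := x0 - orthoproj hK x0.
have fw : f w = f x0.
  by rewrite /w fD -scaleN1r fZ (orthoproj_in hK x0) mulr0 addr0.
have ww_neq0 : ip w w != 0.
  by apply: contra_notN fx0_neq0 => /eqP /(ip_eq0 hH) w0; rewrite -fw w0.
exists (conjc (f w / ip w w) *: w) => x.
rewrite (formZr hf) conjcK.
have : ip (f x *: w - f w *: x) w = 0.
  rewrite (formC hf) orthoproj_orth ?conjc0 // /K fD -scaleNr !fZ fw; ring.
rewrite (formBl hf) !(formZl hf) => /eqP; rewrite subr_eq0 => /eqP eq_fx.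
by apply: (mulIf ww_neq0); rewrite eq_fx; field.
Qed.

Lemma adjoint_exists T : bounded_op ip T ->
  exists Ts, bounded_op ip Ts /\ is_adjoint ip T Ts.
Proof.
move=> hT.
have riesz y : exists z, forall x, ip (T x) y = ip x z.
  apply: riesz_representation; first by move=> a x x'; rewrite hT.1 hf.1.
  by move=> u l fu0 ul; apply: ip_limit_eq0l (converges_op hT ul) fu0.
have [Ts Ts_adj] := choice riesz.
have Ts_lin : linear_op Ts.
  move=> a x y; apply: (ip_ext hH) => z.
  by rewrite -Ts_adj !(formDr hf) !(formZr hf) -!Ts_adj.
exists Ts; split=> [|x y]; last by rewrite Ts_adj.
split=> //; have [C C_gt0 hC] := bounded_op_gt0 hT; exists C => y.
have [Tsy0|Tsy_neq0] := eqVneq (hnorm (Ts y)) 0.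
  by rewrite Tsy0 mulr_ge0 ?hnorm_ge0 ?ltW.
have Tsy_gt0 : 0 < hnorm (Ts y) by rewrite lt0r Tsy_neq0 hnorm_ge0.
suff : hnorm (Ts y) * hnorm (Ts y) <= hnorm (Ts y) * (C * hnorm y).
  by rewrite ler_pM2l.
rewrite -expr2 hnorm_sqr // /qform -Ts_adj (Re_formC hf).
apply: le_trans (Re_ip_le hH _ _) _; rewrite mulrC mulrA ler_wpM2r ?hnorm_ge0 // mulrC.
exact: hC.
Qed.

End Projection.

(** * Baire category and the open mapping theorem *)

Section OpenMapping.
Variables (R : realType) (H : lmodType R[i]) (ip : H -> H -> R[i]).
Hypothesis hH : is_separable_hilbert ip.
Local Notation hnorm := (hnorm ip).
Local Notation converges := (converges ip).

Lemma nested_balls_limit (p : nat -> H) (r : nat -> R) :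
  (forall k, 0 < r k) ->
  (forall k, hnorm (p k.+1 - p k) <= r k / 2 /\ r k.+1 <= r k / 2) ->
  exists2 l, converges p l & forall j, hnorm (l - p j) <= r j.
Proof.
move=> r_gt0 step.
have r_le k : r k <= r 0%N * halfpow R k.
  elim: k => [|k IH]; first by rewrite halfpow0 mulr1.
  by rewrite halfpowS mulrA; have := (step k).2; lra.
have [l pl] : exists l, converges p l.
  apply/(complete hH)/(cauchy_geometric hH (C := r 0%N)) => k.
  by apply: le_trans (step k).1 _; have := r_le k; have := r_gt0 k; lra.
exists l => // j.
have tail k : hnorm (p (k + j)%N - p j) + r (k + j)%N <= r j.
  elim: k => [|k IH]; first by rewrite add0n subrr (hnorm0 hH) add0r.
  have := hnormB_le hH (p (k.+1 + j)%N) (p (k + j)%N) (p j).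
  by rewrite addSn; have := step (k + j)%N; lra.
apply: (converges_hnorm_le_bound hH (u := fun k => p (k + j)%N - p j)).
  exact: (convergesB hH (converges_shift j pl) (converges_cst hH (p j))).
by move=> k; have := tail k; have := r_gt0 (k + j)%N; lra.
Qed.

(* Baire category theorem for a closed set [S] covered by closed sets [D n]
   (closedness being stated as openness of the complement). *)
Lemma baire (S : H -> Prop) (D : nat -> H -> Prop) (p0 : H) :
  closed_set ip S -> S p0 ->
  (forall n s, ~ D n s ->
     exists2 e, 0 < e & forall s', hnorm (s' - s) < e -> ~ D n s') ->
  (forall s, S s -> exists n, D n s) ->
  exists n p r, [/\ S p, 0 < r & forall s, S s -> hnorm (s - p) < r -> D n s].
Proof.
move=> S_closed Sp0 D_open_compl S_cover; apply: contrapT => no_ball.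
have shrink (kq : nat * (H * R)) : exists q : H * R,
    S kq.2.1 -> 0 < kq.2.2 ->
    [/\ S q.1, 0 < q.2, q.2 <= kq.2.2 / 2, hnorm (q.1 - kq.2.1) <= kq.2.2 / 2 &
        forall s, hnorm (s - q.1) < 2 * q.2 -> ~ D kq.1 s].
  case: kq => k [p r] /=.
  have [[Sp r_gt0]|] := pselect (S p /\ 0 < r); last first.
    by move=> nSpr; exists (p, r) => Sp r_gt0; exfalso; apply: nSpr.
  have [s [Ss lt_s nDs]] : exists s, [/\ S s, hnorm (s - p) < r / 2 & ~ D k s].
    apply: contrapT => all_D; apply: no_ball; exists k, p, (r / 2).
    split=> //; first by rewrite divr_gt0.
    by move=> s Ss lt_s; apply: contrapT => nDs; apply: all_D; exists s.
  have [e e_gt0 ball_nD] := D_open_compl k s nDs.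
  have le_min : Num.min (r / 2) (e / 2) <= e / 2 by rewrite ge_min lexx orbT.
  exists (s, Num.min (r / 2) (e / 2)) => _ _ /=; split => //.
  - by rewrite lt_min !divr_gt0.
  - by rewrite ge_min lexx.
  - exact: ltW.
  - by move=> s' lt_s'; apply: ball_nD; lra.
have [F hF] := choice shrink.
pose z := fix z n := if n is n'.+1 then F (n', z n') else (p0, 1).
have zS n : z n.+1 = F (n, z n) by [].
have z_inv n : S (z n).1 /\ 0 < (z n).2.
  elim: n => [|n [IH1 IH2]]; first by split=> //=; exact: ltr01.
  by rewrite zS; have [] := hF (n, z n) IH1 IH2.
have [l zl l_near] : exists2 l, converges (fun n => (z n).1) l &
    forall j, hnorm (l - (z j).1) <= (z j).2.
  apply: nested_balls_limit => [k|k]; first by case: (z_inv k).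
  by rewrite zS; have [] := hF (k, z k) (z_inv k).1 (z_inv k).2.
have [n Dnl] := S_cover l (S_closed _ _ (fun n => (z_inv n).1) zl).
have [_ r_gt0 _ _ ball_nD] := hF (n, z n) (z_inv n).1 (z_inv n).2.
apply: (ball_nD l) Dnl; have := l_near n.+1; rewrite zS /=; lra.
Qed.

Lemma op_image_subspace (T : H -> H) (M : H -> Prop) :
  linear_op T -> subspace M -> subspace (op_image T M).
Proof.
move=> hT hM; split.
- by exists 0; [exact: subspace0 | exact: linop0].
- move=> _ _ [x Mx <-] [y My <-]; exists (x + y); first exact: subspaceD.
  exact: linopD.
- move=> a _ [x Mx <-]; exists (a *: x); first exact: subspaceZ.
  exact: linopZ.
Qed.

Section ClosedImage.
Variables (T : H -> H) (M : H -> Prop).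
Hypotheses (hT : bounded_op ip T) (hM : closed_subspace ip M).
Hypothesis S_closed : closed_set ip (op_image T M).
Local Notation S := (op_image T M).
Let hMs : subspace M. Proof. by case: hM. Qed.
Let hSs : subspace S. Proof. exact: op_image_subspace hT.1 hMs. Qed.

Definition near_image (c : R) (s : H) := forall e, 0 < e ->
  exists x, [/\ M x, hnorm x <= c & hnorm (T x - s) < e].

Lemma near_image_open_compl c s : ~ near_image c s ->
  exists2 e, 0 < e & forall s', hnorm (s' - s) < e -> ~ near_image c s'.
Proof.
move=> not_near.
have [e e_gt0 far] : exists2 e, 0 < e &
    forall x, M x -> hnorm x <= c -> e <= hnorm (T x - s).
  apply: contrapT => no_e; apply: not_near => e e_gt0; apply: contrapT => no_x.
  apply: no_e; exists e => // x Mx le_x; rewrite leNgt; apply/negP => lt_x.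
  by apply: no_x; exists x.
exists (e / 2) => [|s' lt_s' near_s']; first by rewrite divr_gt0.
have [x [Mx le_x lt_Tx]] := near_s' (e / 2) (divr_gt0 e_gt0 (ltr0Sn _ 1)).
by have := far x Mx le_x; have := hnormB_le hH (T x) s' s; lra.
Qed.

(* Baire yields a ball around some [p]; subtracting approximants of [p] from those
   of [p + s] gives a ball around [0], with twice the radius bound. *)
Lemma near_image_ball0 :
  exists c r, 0 < r /\ forall s, S s -> hnorm s < r -> near_image c s.
Proof.
have cover s : S s -> exists n : nat, near_image n%:R s.
  case=> x Mx <-; exists (Num.bound (hnorm x)) => e e_gt0; exists x.
  by rewrite subrr (hnorm0 hH) ltW ?archi_boundP ?hnorm_ge0.
have [n [p [r [Sp r_gt0 near_p]]]] := @baire S (fun n => near_image n%:R) 0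
  S_closed (subspace0 hSs) (fun n => @near_image_open_compl n%:R) cover.
exists (2 * n%:R), r; split=> // s Ss lt_s e e_gt0.
have e2_gt0 : 0 < e / 2 by rewrite divr_gt0.
have lt_ps : hnorm (p + s - p) < r by rewrite addrAC subrr add0r.
have lt_pp : hnorm (p - p) < r by rewrite subrr (hnorm0 hH).
have [x1 [Mx1 le_x1 lt_x1]] := near_p _ (subspaceD hSs Sp Ss) lt_ps _ e2_gt0.
have [x2 [Mx2 le_x2 lt_x2]] := near_p _ Sp lt_pp _ e2_gt0.
exists (x1 - x2); split; first exact: subspaceB.
  by have := hnormB_le hH x1 0 x2; rewrite subr0 sub0r (hnormN hH); lra.
have -> : T (x1 - x2) - s = (T x1 - (p + s)) - (T x2 - p).
  by rewrite (linopB hT.1) opprB opprD !addrA [T x1 - p - s + p]addrAC subrK addrAC.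
by have := hnormB_le hH (T x1 - (p + s)) 0 (T x2 - p); rewrite subr0 sub0r (hnormN hH); lra.
Qed.

(* Rescaling [s] into the ball of [near_image_ball0]. *)
Lemma approx_preimage : exists2 c, 0 < c & forall s, S s -> forall e, 0 < e ->
  exists x, [/\ M x, hnorm x <= c * hnorm s & hnorm (T x - s) < e].
Proof.
have [c [r [r_gt0 near0]]] := near_image_ball0.
exists (2 * `|c| / r + 1) => [|s Ss e e_gt0].
  by rewrite ltr_wpDl ?divr_ge0 ?mulr_ge0 ?normr_ge0 ?ltW.
have [->|s_neq0] := eqVneq s 0.
  exists 0; split; first exact: subspace0.
    by rewrite (hnorm0 hH) mulr0.
  by rewrite (linop0 hT.1) subrr (hnorm0 hH).
have s_gt0 : 0 < hnorm s.
  by rewrite lt0r hnorm_ge0 andbT; apply: contra_neq s_neq0; apply: hnorm_eq0.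
set t := r / (2 * hnorm s); have t_gt0 : 0 < t by rewrite divr_gt0 ?mulr_gt0.
have ts_eq : t * hnorm s = r / 2 by rewrite /t; field; rewrite gt_eqF.
have lt_ts : hnorm (t%:C *: s) < r by rewrite (hnormZr hH) gtr0_norm // ts_eq; lra.
have [x [Mx le_x lt_Tx]] := near0 _ (subspaceZ hSs _ Ss) lt_ts _ (mulr_gt0 t_gt0 e_gt0).
exists (t^-1%:C *: x); split; first exact: subspaceZ.
  rewrite (hnormZr hH) gtr0_norm ?invr_gt0 // ler_pdivrMl //.
  have -> : t * ((2 * `|c| / r + 1) * hnorm s) = `|c| + t * hnorm s.
    by rewrite mulrDl mul1r mulrDr [t * (_ * hnorm s)]mulrCA ts_eq; field; rewrite gt_eqF.
  by have := ler_norm c; have := mulr_gt0 t_gt0 s_gt0; lra.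
have -> : T (t^-1%:C *: x) - s = t^-1%:C *: (T x - t%:C *: s).
  by rewrite (linopZ hT.1) scalerBr scalerA -rmorphM /= mulVf ?gt_eqF // scale1r.
by rewrite (hnormZr hH) gtr0_norm ?invr_gt0 // ltr_pdivrMl.
Qed.

Lemma correction_sequence c s : 0 < c ->
  (forall s, S s -> forall e, 0 < e ->
     exists x, [/\ M x, hnorm x <= c * hnorm s & hnorm (T x - s) < e]) ->
  S s -> 0 < hnorm s ->
  exists xs : nat -> H, [/\ forall k, M (xs k),
    forall k, hnorm (xs k) <= c * hnorm s * halfpow R k &
    forall k, hnorm (s - T (\sum_(i < k) xs i)) <= halfpow R k * hnorm s].
Proof.
move=> c_gt0 approx Ss s_gt0.
have step (kt : nat * H) : exists x, S kt.2 ->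
    [/\ M x, hnorm x <= c * hnorm kt.2 & hnorm (T x - kt.2) < halfpow R kt.1.+1 * hnorm s].
  have [St|] := pselect (S kt.2); last by exists 0.
  have [x hx] := approx _ St _ (mulr_gt0 (halfpow_gt0 R kt.1.+1) s_gt0).
  by exists x.
have [G hG] := choice step.
pose res := fix res k := if k is k'.+1 then res k' - T (G (k', res k')) else s.
have resS k : res k.+1 = res k - T (G (k, res k)) by [].
have res_inv k : S (res k) /\ hnorm (res k) <= halfpow R k * hnorm s.
  elim: k => [|k [S_res le_res]]; first by rewrite halfpow0 mul1r.
  have [/= M_G _ lt_G] := hG (k, res k) S_res; split.
    by apply: (subspaceB hSs S_res); exists (G (k, res k)).
  by rewrite (hnormBC hH); apply: ltW.
pose xs k := G (k, res k).
have res_sum j : s - T (\sum_(i < j) xs i) = res j.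
  elim: j => [|j IH]; first by rewrite big_ord0 (linop0 hT.1) subr0.
  by rewrite big_ord_recr /= (linopD hT.1) opprD addrA IH.
exists xs; split=> k; have [M_G le_G _] := hG (k, res k) (res_inv k).1 => //.
  apply: le_trans le_G _; rewrite -mulrA ler_wpM2l ?(ltW c_gt0) // mulrC.
  exact: (res_inv k).2.
by rewrite res_sum; exact: (res_inv k).2.
Qed.

Lemma series_geometric_limit (x : nat -> H) (C : R) :
  (forall k, hnorm (x k) <= C * halfpow R k) ->
  exists2 l, converges (fun n => \sum_(i < n) x i) l & hnorm l <= 2 * C.
Proof.
move=> le_x; have C_ge0 : 0 <= C.
  by have := le_x 0%N; rewrite halfpow0 mulr1; apply: le_trans; apply: hnorm_ge0.
have sumS n : \sum_(i < n.+1) x i = \sum_(i < n) x i + x n by rewrite big_ord_recr.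
have [l sum_l] : exists l, converges (fun n => \sum_(i < n) x i) l.
  apply/(complete hH)/(cauchy_geometric hH (C := C)) => n.
  by rewrite sumS addrAC subrr add0r.
exists l => //; apply: (converges_hnorm_le_bound hH sum_l) => n.
suff : hnorm (\sum_(i < n) x i) <= 2 * C * (1 - halfpow R n).
  by move=> /le_trans; apply; have := halfpow_gt0 R n; nra.
elim: n => [|n IH]; first by rewrite big_ord0 (hnorm0 hH) halfpow0 subrr mulr0.
rewrite sumS; apply: le_trans (hnormD hH _ _) _.
by have := le_x n; rewrite halfpowS; lra.
Qed.

Lemma open_mapping : exists2 c, 0 < c & forall s, S s ->
  exists x, [/\ M x, T x = s & hnorm x <= c * hnorm s].
Proof.
have [c c_gt0 approx] := approx_preimage.
exists (2 * c) => [|s Ss]; first by rewrite mulr_gt0.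
have [->|s_neq0] := eqVneq s 0.
  exists 0; split; [exact: subspace0 | exact: linop0 hT.1 | by rewrite (hnorm0 hH) mulr0].
have s_gt0 : 0 < hnorm s.
  by rewrite lt0r hnorm_ge0 andbT; apply: contra_neq s_neq0; apply: hnorm_eq0.
have [xs [M_xs le_xs res_xs]] := correction_sequence c_gt0 approx Ss s_gt0.
have [l sum_l le_l] := series_geometric_limit le_xs.
exists l; split; last by rewrite -mulrA.
  apply: hM.2 sum_l => n; exact: subspace_sum.
have res0 : converges (fun n => T (\sum_(i < n) xs i) - s) 0.
  apply: (converges_halfpow0 (c := hnorm s)) => n.
  by rewrite (hnormBC hH) res_xs.
apply: (converges_unique hH (converges_op hT sum_l)) => e /res0 [N hN].
by exists N => n /hN; rewrite subr0.
Qed.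

End ClosedImage.

End OpenMapping.

Section RightInverse.
Variables (R : realType) (H : lmodType R[i]) (ip : H -> H -> R[i]).
Hypothesis hH : is_separable_hilbert ip.
Local Notation hnorm := (hnorm ip).
Variables (T : H -> H) (M : H -> Prop).
Hypotheses (hT : bounded_op ip T) (hM : closed_subspace ip M).
Hypothesis S_closed : closed_set ip (op_image T M).
Local Notation S := (op_image T M).
Let hMs : subspace M. Proof. by case: hM. Qed.
Let hSs : subspace S. Proof. exact: op_image_subspace hT.1 hMs. Qed.
Let hf := hilbert_hermitian hH.

Lemma kernel_closed_subspace : closed_subspace ip (fun x => M x /\ T x = 0).
Proof.
split; first split.
- by split; [exact: subspace0 | exact: linop0 hT.1].
- move=> x y [Mx Tx0] [My Ty0]; split; first exact: subspaceD.
  by rewrite (linopD hT.1) Tx0 Ty0 addr0.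
- move=> a x [Mx Tx0]; split; first exact: subspaceZ.
  by rewrite (linopZ hT.1) Tx0 scaler0.
move=> u l Ku ul; split; first by apply: hM.2 ul => n; case: (Ku n).
apply: (converges_unique hH (converges_op hT ul)).
have -> : (fun n => T (u n)) = fun=> 0 by apply: funext => n; case: (Ku n).
exact: converges_cst.
Qed.

(* Pick preimages orthogonal to the kernel of [T] in [M]; they depend linearly on [s]. *)
Lemma bounded_right_inverse : exists X : H -> H, exists2 c, 0 < c &
  [/\ forall s, S s -> M (X s) /\ T (X s) = s,
      forall s, S s -> hnorm (X s) <= c * hnorm s &
      forall a s s', S s -> S s' -> X (a *: s + s') = a *: X s + X s'].
Proof.
have [c c_gt0 preimage] := open_mapping hH hT hM S_closed.
have preimage' s : exists x, S s -> [/\ M x, T x = s & hnorm x <= c * hnorm s].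
  have [Ss|] := pselect (S s); last by exists 0.
  by have [x hx] := preimage s Ss; exists x.
have [Y hY] := choice preimage'.
have hK := kernel_closed_subspace.
set K := fun x => M x /\ T x = 0 in hK.
pose X s := Y s - orthoproj hH hK (Y s).
have X_orth s k : K k -> ip (X s) k = 0 by apply: orthoproj_orth.
have X_pre s : S s -> M (X s) /\ T (X s) = s.
  move=> Ss; have [MY TY _] := hY s Ss; have [MP TP] := orthoproj_in hH hK (Y s).
  by split; [apply: subspaceB | rewrite (linopB hT.1) TY TP subr0].
have X_unique x1 x2 : M x1 -> M x2 -> (forall k, K k -> ip x1 k = 0) ->
    (forall k, K k -> ip x2 k = 0) -> T x1 = T x2 -> x1 = x2.
  move=> Mx1 Mx2 x1_orth x2_orth eqT; apply/eqP; rewrite -subr_eq0; apply/eqP.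
  have Kd : K (x1 - x2) by split; [apply: subspaceB | rewrite (linopB hT.1) eqT subrr].
  by apply: (ip_eq0 hH); rewrite (formBl hf) x1_orth // x2_orth // subrr.
exists X, c => //; split => //.
  move=> s Ss; have [_ _ le_Y] := hY s Ss.
  exact: le_trans (hnorm_sub_orthoproj_le hH hK _) le_Y.
move=> a s s' Ss Ss'.
have Sas : S (a *: s + s') by apply: (subspaceD hSs) Ss'; exact: (subspaceZ hSs).
apply: X_unique; first exact: (X_pre _ Sas).1.
- by apply: (subspaceD hMs); [apply: (subspaceZ hMs); case: (X_pre _ Ss) | case: (X_pre _ Ss')].
- exact: X_orth.
- by move=> k Kk; rewrite hf.1 !X_orth // mulr0 addr0.
by rewrite hT.1 (X_pre _ Sas).2 (X_pre _ Ss).2 (X_pre _ Ss').2.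
Qed.

End RightInverse.

(** * A-orthogonal projections and A-inverses *)

Section AOrthogonality.
Variables (R : realType) (H : lmodType R[i]) (ip : H -> H -> R[i]).
Hypothesis hH : is_separable_hilbert ip.
Variables (A : H -> H) (S : H -> Prop).
Let hf := hilbert_hermitian hH.

Definition Aform : H -> H -> R[i] := fun x y => ip (A x) y.

Definition A_orth (w : H) := forall s, S s -> ip (A s) w = 0.

Definition A_projection (Q : H -> H) := [/\ bounded_op ip Q,
  forall y, S (Q y), forall s, S s -> Q s = s & forall y, A_orth (y - Q y)].

Lemma A_orth_subspace : subspace A_orth.
Proof.
split=> [s _|x y x_orth y_orth s Ss|a x x_orth s Ss]; first exact: (form0r hf).
  by rewrite (formDr hf) x_orth // y_orth // addr0.
by rewrite (formZr hf) x_orth // mulr0.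
Qed.

Lemma A_orth_closed : closed_set ip A_orth.
Proof. by move=> u l u_orth ul s Ss; apply: (ip_limit_eq0r hH ul) => n; apply: u_orth. Qed.

Lemma compatible_A_projection : compatible ip A S -> exists Q, A_projection Q.
Proof.
case=> Q [hQ QQ rangeQ [Qs [_ [Q_adj AQ]]]].
have QS y : S (Q y) by apply/rangeQ; exists y.
have Q_id s : S s -> Q s = s by move=> /rangeQ [x <-]; rewrite QQ.
exists Q; split=> // y s Ss.
rewrite -(Q_id s Ss) AQ (formC hf) -Q_adj (linopB hQ.1) QQ subrr (form0l hf).
exact: conjc0.
Qed.

Hypothesis hA : positive_op ip A.

(* Polarization: [ip (A z) z] is real for [z = x + y] and [z = x + 'i y]. *)
Lemma positive_op_selfadjoint : is_adjoint ip A A.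
Proof.
move=> x y; rewrite [RHS](formC hf).
have Im0 z : complex.Im (ip (A z) z) = 0 by apply: ger0_Im; apply: hA.2.
have := Im0 (x + y); have := Im0 (x + 'i *: y); have := Im0 x; have := Im0 y.
rewrite !(linopD hA.1.1) (linopZ hA.1.1) !(formDl hf) !(formDr hf).
rewrite !(formZl hf) !(formZr hf).
case: (ip (A x) x) => a1 b1; case: (ip (A x) y) => a b; case: (ip (A y) x) => c d.
case: (ip (A y) y) => g h /=; simpc => *.
by apply/eqP; rewrite eq_complex /=; apply/andP; split; apply/eqP; lra.
Qed.

Lemma Aform_hermitian : hermitian_form Aform.
Proof.
split=> [a x y z|x y]; first by rewrite /Aform hA.1.1 hf.1.
by rewrite /Aform positive_op_selfadjoint -(formC hf).
Qed.

Lemma qform_Aform_ge0 z : 0 <= qform Aform z.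
Proof. by have := hA.2 z; rewrite lecE => /andP[]. Qed.

Lemma Anorm_le z w : qform Aform z <= qform Aform w -> Anorm ip A z <= Anorm ip A w.
Proof. by move=> le_zw; rewrite ler_sqrt // qform_Aform_ge0. Qed.

Lemma A_orth_sym w s : A_orth w -> S s -> ip (A w) s = 0.
Proof.
move=> w_orth Ss; rewrite positive_op_selfadjoint (formC hf).
by rewrite w_orth // conjc0.
Qed.

Lemma A_projection_compatible Q : A_projection Q -> compatible ip A S.
Proof.
case=> hQ QS Q_id Q_orth; have [Qs [hQs Q_adj]] := adjoint_exists hH hQ.
exists Q; split=> //; first by move=> x; rewrite Q_id.
  by move=> y; split=> [[x <-] //|Sy]; exists y; rewrite Q_id.
have AC u v : ip (A v) u = conjc (ip (A u) v) := (Aform_hermitian).2 u v.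
have orth_part s u : S s -> ip (A s) u = ip (A s) (Q u).
  by move=> Ss; rewrite -{1}[u](subrK (Q u)) (formDr hf) Q_orth // add0r.
exists Qs; split=> //; split=> // x; apply: (ip_ext hH) => z.
rewrite -Q_adj -positive_op_selfadjoint -[ip (Q z) (A x)]positive_op_selfadjoint.
by rewrite (orth_part (Q z) x (QS z)) (AC (Q x) z) (orth_part (Q x) z (QS x)) -AC.
Qed.

End AOrthogonality.

Section AInverse.
Variables (R : realType) (H : lmodType R[i]) (ip : H -> H -> R[i]).
Hypothesis hH : is_separable_hilbert ip.
Variables (A B : H -> H) (M : H -> Prop).
Hypotheses (hA : positive_op ip A) (hB : bounded_op ip B) (hM : closed_subspace ip M).
Hypothesis S_closed : closed_set ip (op_image B M).
Local Notation S := (op_image B M).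
Local Notation A_orth := (A_orth ip A S).
Let hAf := Aform_hermitian hH hA.
Let hMs : subspace M. Proof. by case: hM. Qed.
Let hSs : subspace S. Proof. exact: op_image_subspace hB.1 hMs. Qed.

Lemma A_orth_residual G :
  A_inverse_restricted ip A B M G -> forall y, A_orth (y - B (G y)).
Proof.
case=> _ G_M G_min y _ [x Mx <-].
have G_My : M (G y) by apply: G_M; exists y.
rewrite -[ip _ _]/(Aform ip A _ _) (formC hAf).
rewrite (form_eq0_of_qform_min hAf) ?conjc0 // => c.
have -> : y - B (G y) - c *: B x = y - B (G y + c *: x).
  by rewrite (linopD hB.1) (linopZ hB.1) opprD addrA.
have M_x' : M (G y + c *: x) by apply: (subspaceD hMs) => //; apply: (subspaceZ hMs).
rewrite -ler_sqrt; first exact: (G_min y _ M_x').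
exact: qform_Aform_ge0.
Qed.

Lemma A_projection_of_A_inverse G :
  A_inverse_restricted ip A B M G -> exists Q, A_projection ip A S Q.
Proof.
move=> hG; have res_orth := A_orth_residual hG; have [hG_b G_M _] := hG.
have hN : closed_subspace ip (fun z => S z /\ A_orth z).
  have orth_s := A_orth_subspace hH A S.
  split; first split.
  - by split; [exact: (subspace0 hSs) | exact: (subspace0 orth_s)].
  - move=> x y [Sx ox] [Sy oy].
    by split; [exact: (subspaceD hSs) | exact: (subspaceD orth_s)].
  - move=> a x [Sx ox].
    by split; [exact: (subspaceZ hSs) | exact: (subspaceZ orth_s)].
  move=> u l Nu ul; split; first by apply: S_closed ul => n; case: (Nu n).
  by apply: (A_orth_closed hH) ul => n; case: (Nu n).
pose P := orthoproj hH hN.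
pose Q y := B (G y) + P (y - B (G y)).
have BG_S y : S (B (G y)) by exists (G y) => //; apply: G_M; exists y.
have QS y : S (Q y).
  by apply: (subspaceD hSs) => //; case: (orthoproj_in hH hN (y - B (G y))).
have res_eq y : y - Q y = (y - B (G y)) - P (y - B (G y)) by rewrite opprD addrA.
have Q_orth y : A_orth (y - Q y).
  rewrite res_eq; apply: (subspaceB (A_orth_subspace hH A S)) => //.
  by case: (orthoproj_in hH hN (y - B (G y))).
exists Q; split=> //.
- have hBG := bounded_op_comp hB hG_b.
  apply: (bounded_opD hH) => //; apply: bounded_op_comp; first exact: orthoproj_bounded.
  by apply: (bounded_opB hH) hBG; exact: bounded_op_id.
- move=> s Ss; apply/eqP; rewrite eq_sym -subr_eq0; apply/eqP; apply: (ip_eq0 hH).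
  rewrite res_eq orthoproj_orth //; rewrite -res_eq; split; last exact: Q_orth.
  exact: (subspaceB hSs).
Qed.

Lemma A_inverse_of_A_projection Q :
  A_projection ip A S Q -> exists G, A_inverse_restricted ip A B M G.
Proof.
case=> hQ QS Q_id Q_orth.
have [X [c c_gt0 [X_pre X_le X_lin]]] := bounded_right_inverse hH hB hM S_closed.
have [CQ CQ_gt0 hCQ] := bounded_op_gt0 hQ.
exists (fun y => X (Q y)); split.
- split=> [a y y'|]; first by rewrite hQ.1 X_lin.
  exists (c * CQ) => y; apply: le_trans (X_le _ (QS y)) _.
  by rewrite -mulrA ler_pM2l.
- by move=> _ [y <-]; case: (X_pre _ (QS y)).
move=> y x Mx; rewrite (X_pre _ (QS y)).2; apply: Anorm_le => //.
have Sd : S (Q y - B x) by apply: (subspaceB hSs) => //; exists x.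
have -> : y - B x = (y - Q y) + (Q y - B x) by rewrite addrA subrK.
rewrite (qformD hAf (y - Q y)) /Aform (A_orth_sym hH hA (Q_orth y)) // mulr0 addr0.
by rewrite lerDl (qform_Aform_ge0 hA).
Qed.

End AInverse.

Theorem mainTheorem15 (R : realType) (H : lmodType (R[i])) (ip : H -> H -> R[i])
  (A B : H -> H) (M : H -> Prop) :
  is_separable_hilbert ip ->
  positive_op ip A ->
  bounded_op ip B ->
  closed_set ip (op_range B) ->
  closed_subspace ip M ->
  closed_set ip (op_image B M) ->
  ((exists G : H -> H, A_inverse_restricted ip A B M G) <->
   compatible ip A (op_image B M)).
Proof.
move=> hH hA hB _ hM S_closed; split.
  case=> G /(A_projection_of_A_inverse hH hA hB hM S_closed) [Q].
  exact: A_projection_compatible.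
case/(compatible_A_projection hH) => Q.
exact: A_inverse_of_A_projection.
Qed.
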